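(* Let $\mathbb{E}$ be a field with $p=\mathrm{char}(\mathbb{E})$, let $m>1$ with $\gcd(m,p)=1$ if $p>0$, and let $s_0,\ldots,s_{m-1}$ be an enumeration of a subgroup $M$ of $\mathbb{E}^*$ of size $m$ such that $\phi_{p,m}(x)$ divides $\tilde{s}(x)=s_0x^{m-1}+s_1x^{m-2}+\cdots+s_{m-1}$. Let $f(x)=(x^m-1)/\gcd(x^m-1,\tilde{s}(x))$. Then the sequence obtained by extending $s_0,\ldots,s_{m-1}$ periodically with period $m$ is an $f$-sequence presenting $M$, and $f$ divides $(x^m-1)/\big((x-1)\phi_{p,m}(x)\big)$; that is, $M$ is an automatically non-standard $f$-subgroup.
   Context: $\phi_{p,m}(x)$ is the $m$th cyclotomic polynomial $\phi_m(x)\in\mathbb{Z}[x]$ (defined by $x^m-1=\prod_{d\mid m}\phi_d(x)$), reduced modulo $p$ if $p>0$; when $\gcd(m,p)=1$ its zeros are exactly the primitive $m$th roots of unity. An $f$-sequence is a two-way infinite sequence with $f(\sigma)s=0$, $(\sigma s)_n=s_{n+1}$. A sequence $s$ presents a finite subgroup $M$ if $s$ has smallest period $|M|$ and $M=\{s_0,\ldots,s_{|M|-1}\}$. Definition: for a field $\mathbb{F}$ of characteristic $p$ and $m>1$ with $\gcd(m,p)=1$ if $p>0$, if $f\in\mathbb{F}[x]$ divides $(x^m-1)/((x-1)\phi_{p,m}(x))$ and an $f$-sequence $s$ (over an extension of $\mathbb{F}$) of period $m$ has $M=\{s_0,\ldots,s_{m-1}\}$ a subgroup of size $m$, then $M$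 is called an automatically non-standard $f$-subgroup. *)

From HB Require Import structures.
From mathcomp Require Import all_boot all_order all_algebra all_field.
Set Implicit Arguments. Unset Strict Implicit. Unset Printing Implicit Defensive.
Import Order.TTheory GRing.Theory Num.Theory.
Local Open Scope ring_scope.

(* phi_{p,m}: the m-th cyclotomic polynomial of Z[x] mapped into F[x]
   (i.e. reduced mod p = char F when p > 0). *)
Definition cycloF (F : fieldType) (m : nat) : {poly F} :=
  map_poly (fun z : int => z%:~R) 'Phi_m.

Definition stilde (F : fieldType) (s : seq F) : {poly F} :=
  \sum_(i < size s) s`_i *: 'X^((size s).-1 - i).

Definition is_fseq (F : fieldType) (f : {poly F}) (u : int -> F) : Prop :=
  forall n : int, \sum_(k < size f) f`_k * u (n + k%:Z)%R = 0.

Definition has_period (F : fieldType) (u : int -> F) (d : nat) : Prop :=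
  forall n : int, u (n + d%:Z)%R = u n.

Definition presents (F : fieldType) (u : int -> F) (M : seq F) : Prop :=
  [/\ (0 < size M)%N, has_period u (size M),
      (forall d : nat, (0 < d < size M)%N -> ~ has_period u d)
    & M =i [seq u (i%:Z) | i <- iota 0 (size M)]].

Definition is_mult_subgroup (F : fieldType) (M : seq F) : Prop :=
  [/\ uniq M, 0 \notin M, 1 \in M,
      {in M &, forall x y, x * y \in M} & {in M, forall x, x^-1 \in M}].

Definition periodic_ext (F : fieldType) (s : seq F) : int -> F :=
  fun n => s`_(`|(n %% (size s)%:Z)%Z|%N).

(* Automatically non-standard f-subgroup (definition of the paper, with the
   base field F = the field E itself and the sequence over E). *)
Definition auto_nonstandard (F : fieldType) (m : nat) (f : {poly F}) (M : seq F) : Prop :=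
  [/\ (1 < m)%N /\ (forall p, p \in [pchar F] -> coprime m p),
      f %| ('X^m - 1) %/ (('X - 1) * cycloF F m),
      is_mult_subgroup M, size M = m &
      (exists u : int -> F, [/\ is_fseq f u, has_period u m &
                               M =i [seq u (i%:Z) | i <- iota 0 m]])].

From HB Require Import structures.
From mathcomp Require Import all_boot all_order all_algebra all_field zify.
Import GRing.Theory.
Local Open Scope ring_scope.
Set Implicit Arguments. Unset Strict Implicit.

(* A polynomial h acts on two-way sequences u : int -> F through the shift
   operator: (h . u)(n) = sum_k h_k u(n + k).  This is an action of the
   algebra F[x]: it is additive and scalar-linear in h, 'X acts as the shift,
   and (a * b) . u = a . (b . u).  The periodic extension of s is the image
   (x s~) . delta of the indicator delta of mZ, and (x^m - 1) . delta = 0.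
   Writing G = gcd(x^m - 1, s~) and f = (x^m - 1)/G we have
   f * s~ = (s~/G) * (x^m - 1), so f . (periodic_ext s) = 0.
   For the divisibility: the elements of a nontrivial finite subgroup sum to 0,
   hence s~(1) = 0 and (x - 1) | s~; since m is invertible in E the
   polynomial x^m - 1 is separable, so its factors x - 1 and phi_{p,m}
   are coprime and their product divides G; therefore f | (x^m-1)/((x-1)phi).
   Finally the periodic extension has no smaller period than m because the
   enumeration s is duplicate-free. *)

Section ShiftAction.
Variable F : fieldType.
Implicit Types (a b h : {poly F}) (u v : int -> F).

Definition act h u : int -> F := fun n => \sum_(k < size h) h`_k * u (n + k%:Z).

Lemma act_widen h u n N : (size h <= N)%N ->
  act h u n = \sum_(k < N) h`_k * u (n + k%:Z).
Proof.
move=> hN; rewrite /act (big_ord_widen _ (fun k => h`_k * u (n + k%:Z)) hN).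
rewrite big_mkcond /=; apply: eq_bigr => i _; case: ifP => // /negbT.
by rewrite -leqNgt => hi; rewrite nth_default // mul0r.
Qed.

Lemma actD a b u n : act (a + b) u n = act a u n + act b u n.
Proof.
rewrite !(@act_widen _ _ _ (maxn (size a) (size b))) ?leq_maxl ?leq_maxr //.
  by rewrite -big_split; apply: eq_bigr => i _; rewrite coefD mulrDl.
exact: size_polyD.
Qed.

Lemma actZ c a u n : act (c *: a) u n = c * act a u n.
Proof.
rewrite !(@act_widen _ _ _ (size a)) ?size_scale_leq // mulr_sumr.
by apply: eq_bigr => i _; rewrite coefZ mulrA.
Qed.

Lemma actC c u n : act c%:P u n = c * u n.
Proof.
by rewrite -[c%:P]mulr1 mul_polyC actZ /act size_poly1 big_ord1 coef1 mul1r addr0.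
Qed.

Lemma actB a b u n : act (a - b) u n = act a u n - act b u n.
Proof. by rewrite actD -scaleN1r actZ mulN1r. Qed.

Lemma actMX a u n : act (a * 'X) u n = act a u (n + 1).
Proof.
rewrite (@act_widen _ _ _ (size a).+1); last first.
  by rewrite (leq_trans (size_polyMleq _ _)) // size_polyX addn2.
rewrite big_ord_recl coefMX eqxx mul0r add0r /act.
apply: eq_bigr => i _; rewrite coefMX /=; congr (_ * u _).
by rewrite /bump leq0n add1n -addn1 PoszD addrA addrAC.
Qed.

Lemma actXn j u n : act 'X^j u n = u (n + j%:Z).
Proof.
elim: j n => [|j IH] n; first by rewrite expr0 -polyC1 actC mul1r addr0.
by rewrite exprSr actMX IH -addn1 PoszD addrAC addrA.
Qed.

Lemma act_sum N (G : 'I_N -> {poly F}) u n :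
  act (\sum_(i < N) G i) u n = \sum_(i < N) act (G i) u n.
Proof.
elim: N G => [|N IH] G; first by rewrite !big_ord0 /act size_poly0 big_ord0.
by rewrite !big_ord_recr actD IH.
Qed.

Lemma act_ext a u v n : u =1 v -> act a u n = act a v n.
Proof. by move=> e; apply: eq_bigr => i _; rewrite e. Qed.

Lemma act_zero a n : act a (fun _ => 0) n = 0.
Proof. by rewrite /act big1 // => i _; rewrite mulr0. Qed.

Lemma actM a b u n : act (a * b) u n = act a (act b u) n.
Proof.
elim/poly_ind: a n => [|a c IH] n.
  by rewrite mul0r /act size_poly0 !big_ord0.
rewrite mulrDl -mulrA (mulrC 'X) mulrA mul_polyC actD actMX IH actZ.
by rewrite actD actMX actC.
Qed.

Definition delta (m : nat) : int -> F := fun x => if (m %| x)%Z then 1 else 0.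

Lemma act_delta m n : act ('X^m - 1) (delta m) n = 0.
Proof.
by rewrite actB actXn -polyC1 actC mul1r /delta !(sameP dvdz_mod0P eqP) modzDr subrr.
Qed.

End ShiftAction.

Lemma dvdz_sub_residue (m i : nat) (k : int) : (i < m)%N ->
  (m %| k - i%:Z)%Z = (i == `|(k %% m)%Z|%N).
Proof.
move=> im; have m0 : m%:Z != 0 by rewrite eqz_nat -lt0n (leq_ltn_trans _ im).
rewrite -eqz_mod_dvd modz_nat modn_small // -(gez0_abs (modz_ge0 k m0)).
by rewrite eqz_nat eq_sym.
Qed.

Lemma residue_lt (m : nat) (k : int) : (0 < m)%N -> (`|(k %% m)%Z| < m)%N.
Proof.
move=> m0; have m0z : m%:Z != 0 by rewrite eqz_nat -lt0n.
by rewrite -ltz_nat (gez0_abs (modz_ge0 k m0z)) ltz_pmod.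
Qed.

Lemma periodic_ext_delta (F : fieldType) (s : seq F) (k : int) :
  (0 < size s)%N ->
  periodic_ext s k = act (stilde s * 'X) (delta F (size s)) k.
Proof.
move=> s0; rewrite actMX /stilde act_sum.
under eq_bigr => i _.
  rewrite actZ actXn /delta.
  have -> : k + 1 + ((size s).-1 - i)%N%:Z = (k - i%:Z) + (size s)%:Z.
    by have := ltn_ord i; lia.
  rewrite rpredDr ?dvdzz // dvdz_sub_residue //.
  over.
rewrite /= (bigD1 (Ordinal (residue_lt k s0))) //= eqxx mulr1 big1 ?addr0 //.
by move=> i /negbTE; rewrite -val_eqE /= => ->; rewrite mulr0.
Qed.

(* A duplicate-free list stable under multiplication by some g other than
   0 and 1 sums to zero: multiplying by g permutes it, so g * S = S. *)
Lemma sum_mul_stable (F : fieldType) (s : seq F) (g : F) :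
  uniq s -> g != 0 -> g != 1 -> {in s, forall x, g * x \in s} ->
  \sum_(x <- s) x = 0.
Proof.
move=> Us g0 g1 gs.
have Ugs : uniq (map (fun x => g * x) s) by rewrite map_inj_uniq //; apply: mulfI.
have sub : {subset map (fun x => g * x) s <= s} by move=> y /mapP[x /gs xs ->].
have [_ eqs] := uniq_min_size Ugs sub (eq_leq (esym (size_map _ _))).
have gS : \sum_(x <- s) x = g * \sum_(x <- s) x.
  by rewrite mulr_sumr -(perm_big _ (uniq_perm Ugs Us eqs)) big_map.
apply/eqP; move/eqP: gS; rewrite -subr_eq0 -{1}[\sum_(x <- s) x]mul1r -mulrBl.
by rewrite mulf_eq0 subr_eq0 eq_sym (negbTE g1).
Qed.

Lemma sum_mult_subgroup (F : fieldType) (s : seq F) :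
  (1 < size s)%N -> is_mult_subgroup s -> \sum_(x <- s) x = 0.
Proof.
move=> s1 [Us s_n0 s_1 mulM _]; have s0 : (0 < size s)%N by apply: ltnW.
have [g gs g1] : exists2 g, g \in s & g != 1.
  have s01 : s`_0 != s`_1 by rewrite (nth_uniq 0 s0 s1 Us).
  have [e0|] := eqVneq s`_0 1; last by exists s`_0; rewrite ?mem_nth.
  by exists s`_1; rewrite ?mem_nth // -e0 eq_sym.
apply: (sum_mul_stable Us _ g1) => [|x]; last exact: mulM.
by apply: contraNneq s_n0 => <-.
Qed.

Lemma stilde_at1 (F : fieldType) (s : seq F) : (stilde s).[1] = \sum_(x <- s) x.
Proof.
rewrite /stilde horner_sum (big_nth 0) big_mkord.
by apply: eq_bigr => i _; rewrite hornerZ hornerXn expr1n mulr1.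
Qed.

Lemma Xn_sub1_Phi1_Phim (m : nat) : (1 < m)%N ->
  exists2 q : {poly int}, 'X^m - 1 = 'Phi_1 * 'Phi_m * q & 'Phi_1 = 'X - 1.
Proof.
move=> m1; have m0 : (0 < m)%N by apply: ltnW.
have d1 : (1 \in divisors m)%N by rewrite -dvdn_divisors // dvd1n.
have dm : m \in rem 1%N (divisors m).
  rewrite (mem_rem_uniq _ (divisors_uniq m)) inE -dvdn_divisors //.
  by rewrite dvdnn andbT (gtn_eqF m1).
exists (\prod_(d <- rem m (rem 1%N (divisors m))) 'Phi_d).
  by rewrite -(prod_Cyclotomic m0) (big_rem _ d1) (big_rem _ dm) /= mulrA.
by have := prod_Cyclotomic (ltn0Sn 0); rewrite [divisors 1]/= big_seq1 expr1.
Qed.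

Lemma X1_cycloF_dvd (F : fieldType) (m : nat) : (1 < m)%N ->
  ('X - 1) * cycloF F m %| 'X^m - 1.
Proof.
move=> m1; have [q eq_m Phi1] := Xn_sub1_Phi1_Phim m1.
have := congr1 (map_poly (fun z : int => z%:~R : F)) eq_m.
rewrite !rmorphM /= Phi1 !rmorphB /= map_polyXn map_polyX !rmorph1 => ->.
exact: dvdp_mulr.
Qed.

Lemma natr_coprime_pchar (F : fieldType) (m : nat) : (0 < m)%N ->
  (forall p : nat, p \in [pchar F] -> coprime m p) -> m%:R != 0 :> F.
Proof.
move=> m0 chm; apply/negP => mz.
have [p pc] := GRing.natf0_pchar m0 mz.
have := chm p pc; rewrite coprime_sym prime_coprime ?(GRing.pcharf_prime pc) //.
by rewrite (GRing.dvdn_pcharf pc) mz.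
Qed.

(* If x^m - 1 divides f * s~ (m = size s), the periodic extension of s is an
   f-sequence: f . (x s~ . delta) = (q x) . ((x^m - 1) . delta) = 0. *)
Lemma periodic_ext_fseq (F : fieldType) (s : seq F) (f : {poly F}) :
  (0 < size s)%N -> 'X^(size s) - 1 %| f * stilde s -> is_fseq f (periodic_ext s).
Proof.
move=> s0 /dvdpP[q fS] n.
rewrite -/(act f _ n) (act_ext _ _ (fun k => periodic_ext_delta k s0)) -actM.
rewrite mulrA fS mulrAC actM -(act_zero (q * 'X) n).
by apply: act_ext => k; rewrite act_delta.
Qed.

(* The periodic extension of a duplicate-free list s presents s: its values
   at 0, d for 0 < d < size s differ, so no smaller period exists. *)
Lemma periodic_ext_presents (F : fieldType) (s : seq F) :
  (0 < size s)%N -> uniq s -> presents (periodic_ext s) s.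
Proof.
move=> s0 Us.
have at_nat i : (i < size s)%N -> periodic_ext s i%:Z = s`_i.
  by move=> i_s; rewrite /periodic_ext modz_nat modn_small.
split=> //.
- by move=> n; rewrite /periodic_ext modzDr.
- move=> d /andP[d0 ds] /(_ 0); rewrite add0r at_nat // (at_nat 0%N s0).
  by move/eqP; rewrite nth_uniq // => /eqP d_eq0; rewrite d_eq0 in d0.
- rewrite -[X in _ =i X](_ : s = _) //.
  rewrite -{1}(mkseq_nth 0 s); apply/eq_in_map => i.
  by rewrite mem_iota add0n => /at_nat.
Qed.

(* Separability of x^m - 1 makes its factors x - 1 and phi_{p,m} coprime. *)
Lemma quotient_gcd_dvd (F : fieldType) (m : nat) (S : {poly F}) :
  (1 < m)%N -> m%:R != 0 :> F -> cycloF F m %| S -> 'X - 1 %| S ->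
  ('X^m - 1) %/ gcdp ('X^m - 1) S %| ('X^m - 1) %/ (('X - 1) * cycloF F m).
Proof.
move=> m1 mF cS X1S; set P : {poly F} := 'X^m - 1; set G := gcdp P S.
have AP := X1_cycloF_dvd F m1.
have sepP : separable_poly P by apply: separable_Xn_sub_1.
have cop : coprimep ('X - 1) (cycloF F m) := separable_coprime sepP AP.
have AG : ('X - 1) * cycloF F m %| G by rewrite dvdp_gcd AP Gauss_dvdp // X1S.
by rewrite -{2}(divpK (dvdp_gcdl P S)) -/G -divp_mulA // dvdp_mulr.
Qed.

Theorem mainTheorem7 (E : fieldType) (m : nat) (s : seq E) :
  (1 < m)%N ->
  (forall p : nat, p \in [pchar E] -> coprime m p) ->
  size s = m ->
  is_mult_subgroup s ->
  cycloF E m %| stilde s ->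
  let f := ('X^m - 1) %/ gcdp ('X^m - 1) (stilde s) in
  [/\ is_fseq f (periodic_ext s), presents (periodic_ext s) s,
      f %| ('X^m - 1) %/ (('X - 1) * cycloF E m)
    & auto_nonstandard m f s].
Proof.
move=> m1 chm sz grp cS f; have m0 : (0 < m)%N by apply: ltnW.
have fseq : is_fseq f (periodic_ext s).
  apply: periodic_ext_fseq; rewrite sz // /f.
  by rewrite divp_mulAC ?dvdp_gcdl // -divp_mulA ?dvdp_gcdr // dvdp_mulr.
have X1S : 'X - 1 %| stilde s.
  by rewrite -polyC1 dvdp_XsubCl /root stilde_at1 sum_mult_subgroup ?sz.
have fdvd : f %| ('X^m - 1) %/ (('X - 1) * cycloF E m).
  exact: quotient_gcd_dvd (natr_coprime_pchar m0 chm) cS X1S.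
have pres : presents (periodic_ext s) s.
  by case: grp => Us _ _ _ _; apply: periodic_ext_presents; rewrite ?sz.
split=> //; split=> //; exists (periodic_ext s).
by case: pres; rewrite sz.
Qed.
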